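(* Let $n\ge1$, $N=\{1,\dots,n\}$, $A=[0,1]$, and let $f:A^n\to A$ be a mechanism. Then $f$ is an order statistic mechanism if and only if $f$ is both an OWA mechanism and a generalized median voter scheme (GMVS).
   Context: A mechanism is a map $f:A^n\to A$ from profiles $x=(x_i)_{i\in N}$ of reported locations to a facility location. An OWA mechanism has weights $w_1,\dots,w_n\in[0,1]$ with $\sum_j w_j=1$ and returns $f(x)=\sum_{j=1}^n w_j x_{\pi(j)}$, where $\pi$ is a permutation of $N$ with $x_{\pi(1)}\le\dots\le x_{\pi(n)}$. An order statistic mechanism is one for which there is a fixed $j\in\{1,\dots,n\}$ with $f(x)=x_{\pi(j)}$ (the $j$-th smallest report) for all $x$, i.e., an OWA with $w_j=1$. $f$ is a GMVS if there are parameters $\alpha_S\in A$, one for each nonempty $S\subseteq N$, such that for all $x\in A^n$, $f(x)=\min_{\emptyset\ne S\subseteq N}\max\big(\{x_i: i\in S\}\cup\{\alpha_S\}\big)$. *)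

From HB Require Import structures.
From mathcomp Require Import all_boot all_order all_algebra all_fingroup.
From mathcomp Require Import reals.
Set Implicit Arguments. Unset Strict Implicit. Unset Printing Implicit Defensive.
Import Order.TTheory GRing.Theory Num.Theory.
Local Open Scope ring_scope.

Section Defs.
Variable R : realType.
Variable n : nat.

Definition inA (a : R) : Prop := 0 <= a <= 1.

(* profiles x in A^n, agents N = 'I_n (0-indexed) *)
Definition profile_in_A (x : 'I_n -> R) : Prop := forall i, inA (x i).

Definition sorting_perm (x : 'I_n -> R) (pi : {perm 'I_n}) : Prop :=
  forall j k : 'I_n, (j <= k)%N -> x (pi j) <= x (pi k).

Definition is_OWA (f : ('I_n -> R) -> R) : Prop :=
  exists w : 'I_n -> R,
    (forall j, inA (w j)) /\ \sum_(j < n) w j = 1 /\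
    forall x, profile_in_A x -> forall pi, sorting_perm x pi ->
      f x = \sum_(j < n) w j * x (pi j).

Definition is_order_statistic (f : ('I_n -> R) -> R) : Prop :=
  exists j : 'I_n,
    forall x, profile_in_A x -> forall pi, sorting_perm x pi ->
      f x = x (pi j).

(* min over nonempty S of max({x_i : i in S} u {alpha_S}); on [0,1] the
   neutral elements 1 (for min) and 0 (for max) are harmless. *)
Definition is_GMVS (f : ('I_n -> R) -> R) : Prop :=
  exists alpha : {set 'I_n} -> R,
    (forall S, S != set0 -> inA (alpha S)) /\
    forall x, profile_in_A x ->
      f x = \big[Num.min/1]_(S : {set 'I_n} | S != set0)
              Num.max (alpha S) (\big[Num.max/0]_(i in S) x i).

End Defs.

From HB Require Import structures.
From mathcomp Require Import all_boot all_order all_algebra all_fingroup.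
From mathcomp Require Import reals boolp lra.
Set Implicit Arguments.
Unset Strict Implicit.
Unset Printing Implicit Defensive.

Import Order.TTheory GRing.Theory Num.Theory.
Local Open Scope ring_scope.

(* The order statistic x_(j) is the OWA with weights e_j, and the GMVS with
   alpha_S = 0 if |S| > j and alpha_S = 1 otherwise: max_S x >= x_(j) as soon
   as S has more than j agents, with equality for the j+1 lowest ranked ones.
   Conversely, an OWA is positively homogeneous while a GMVS satisfies
   min(t, f x) <= f (min(t, x)). On a 0/1 profile clipping at 1/2 is halving,
   so f x / 2 >= min(1/2, f x), forcing f x in {0, 1}. Applied to the
   indicators of {i | m <= i}, which the identity sorts, this makes every tail
   sum W m = sum_(k >= m) w_k equal to 0 or 1; so each weight
   w_k = W k - W (k+1) >= 0 is 0 or 1, and exactly one of them is 1. *)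

Lemma card_ord_ltn (n j : nat) :
  (j <= n)%N -> #|[set k : 'I_n | (k < j)%N]| = j.
Proof.
move=> le_jn.
have -> : [set k : 'I_n | (k < j)%N] = widen_ord le_jn @: [set: 'I_j].
  apply/setP => k; rewrite inE; apply/idP/imsetP => [lt_kj | [k' _ ->]].
    by exists (Ordinal lt_kj) => //; apply: val_inj.
  exact: (ltn_ord k').
rewrite card_imset ?cardsT ?card_ord // => a b /(congr1 val) ab; exact: val_inj.
Qed.

Lemma card_rank_ltn (n j : nat) (pi : {perm 'I_n}) :
  (j <= n)%N -> #|[set i | ((pi^-1)%g i < j)%N]| = j.
Proof.
move=> le_jn; rewrite -[RHS](card_ord_ltn le_jn).
rewrite -[RHS](card_preimset _ (@perm_inj _ pi^-1)).
by apply: eq_card => i; rewrite !inE.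
Qed.

Section OrderStatistics.
Variables (R : realType) (n : nat).
Implicit Types (x : 'I_n -> R) (pi : {perm 'I_n}) (f : ('I_n -> R) -> R).

Lemma sorting_perm_exists x : exists pi, sorting_perm x pi.
Proof.
pose s := sort (fun i j => x i <= x j) (enum 'I_n).
have size_s : size s = n by rewrite size_sort size_enum_ord.
have uniq_s : uniq s by rewrite sort_uniq enum_uniq.
have sorted_s : sorted (fun i j => x i <= x j) s.
  by apply: sort_sorted => i j; exact: le_total.
have nth_s_inj : injective (fun k : 'I_n => nth k s k).
  move=> a b; rewrite (set_nth_default a b) ?size_s // => /eqP.
  by rewrite nth_uniq ?size_s // => /eqP /val_inj.
exists (perm nth_s_inj) => j k le_jk.
rewrite !permE (set_nth_default j k) ?size_s //.
have leT_tr : transitive (fun i j => x i <= x j) by move=> ? ? ? /le_trans; apply.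
by apply: (sorted_leq_nth leT_tr) => //; rewrite inE size_s.
Qed.

Definition order_statistic_at (j : 'I_n) f :=
  forall x, profile_in_A x -> forall pi, sorting_perm x pi -> f x = x (pi j).

Definition OWA_weights (w : 'I_n -> R) f :=
  forall x, profile_in_A x -> forall pi, sorting_perm x pi ->
    f x = \sum_(j < n) w j * x (pi j).

Lemma bool_profile_in_A (b : 'I_n -> bool) :
  profile_in_A (fun i => (b i)%:R : R).
Proof. by move=> i; rewrite /inA; case: (b i); rewrite ?lexx ?ler01. Qed.

Lemma sum_delta_mul (j : 'I_n) (y : 'I_n -> R) :
  \sum_(k < n) (k == j)%:R * y k = y j.
Proof.
by rewrite (bigD1 j) //= eqxx mul1r big1 ?addr0 // => k /negbTE ->; rewrite mul0r.
Qed.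

Lemma OWA_weights_delta j f :
  OWA_weights (fun k => (k == j)%:R) f <-> order_statistic_at j f.
Proof.
by split=> Hf x xA pi Hpi; rewrite (Hf x xA pi Hpi) ?sum_delta_mul.
Qed.

Lemma order_statistic_OWA j f : order_statistic_at j f -> is_OWA f.
Proof.
move=> Hf; exists (fun k => (k == j)%:R); split; first exact: bool_profile_in_A.
split; last exact/OWA_weights_delta.
by rewrite (bigD1 j) //= eqxx big1 ?addr0 // => k /negbTE ->.
Qed.

Lemma order_statistic_le_bigmax x pi (j : 'I_n) (S : {set 'I_n}) :
  sorting_perm x pi -> (j < #|S|)%N -> x (pi j) <= \big[Num.max/0]_(i in S) x i.
Proof.
move=> Hpi lt_jS.
have [i iS le_ji] : exists2 i, i \in S & (j <= (pi^-1)%g i)%N.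
  apply/exists_inP; apply: contraLR lt_jS.
  rewrite negb_exists_in -leqNgt => /forall_inP lt_S.
  rewrite -(card_rank_ltn pi (ltnW (ltn_ord j))); apply: subset_leq_card.
  by apply/subsetP => k kS; rewrite inE ltnNge lt_S.
apply: le_trans (Hpi _ _ le_ji) _; rewrite permKV; exact: le_bigmax_cond.
Qed.

Lemma bigmax_rank_le x pi (j : 'I_n) :
  sorting_perm x pi -> 0 <= x (pi j) ->
  \big[Num.max/0]_(i in [set i | ((pi^-1)%g i <= j)%N]) x i <= x (pi j).
Proof.
move=> Hpi x_ge0; apply/bigmax_leP; split=> // i; rewrite inE => le_ij.
by rewrite -{1}(permKV pi i); exact: Hpi.
Qed.

Lemma order_statistic_GMVS j f : order_statistic_at j f -> is_GMVS f.
Proof.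
move=> Hf; exists (fun S : {set 'I_n} => if (j < #|S|)%N then 0 else 1); split.
  by move=> S _; rewrite /inA; case: ifP => _; rewrite ?lexx ?ler01.
move=> x xA; have [pi Hpi] := sorting_perm_exists x; rewrite (Hf x xA pi Hpi).
have /andP[x_ge0 x_le1] := xA (pi j).
apply/eqP; rewrite eq_le; apply/andP; split.
- apply: le_bigmin => // S _; case: ifP => lt_jS; last by rewrite le_max x_le1.
  by rewrite le_max (order_statistic_le_bigmax Hpi lt_jS) orbT.
- pose S0 := [set i | ((pi^-1)%g i <= j)%N].
  have card_S0 : #|S0| = j.+1 := card_rank_ltn pi (ltn_ord j).
  have S0_neq0 : S0 != set0 by rewrite -card_gt0 card_S0.
  apply: (bigmin_inf S0) => //; rewrite card_S0 ltnSn ge_max x_ge0.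
  exact: bigmax_rank_le.
Qed.

Lemma OWA_weights_scale w f t x : OWA_weights w f -> inA t -> profile_in_A x ->
  f (fun i => t * x i) = t * f x.
Proof.
move=> Hf /andP[t_ge0 t_le1] xA; have [pi Hpi] := sorting_perm_exists x.
have txA : profile_in_A (fun i => t * x i).
  by move=> i; have /andP[x_ge0 x_le1] := xA i; rewrite /inA mulr_ge0 ?mulr_ile1.
have tHpi : sorting_perm (fun i => t * x i) pi.
  by move=> a b le_ab; rewrite ler_wpM2l ?Hpi.
rewrite (Hf _ txA _ tHpi) (Hf _ xA _ Hpi) mulr_sumr.
by apply: eq_bigr => k _; rewrite mulrCA.
Qed.

Lemma GMVS_min_le f t x : is_GMVS f -> inA t -> profile_in_A x ->
  Num.min t (f x) <= f (fun i => Num.min t (x i)).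
Proof.
case=> alpha [_ Hf] /andP[t_ge0 t_le1] xA.
have txA : profile_in_A (fun i => Num.min t (x i)).
  move=> i; have /andP[x_ge0 x_le1] := xA i.
  by rewrite /inA le_min ge_min t_ge0 x_ge0 t_le1.
have min_bigmax (S : {set 'I_n}) : Num.min t (\big[Num.max/0]_(i in S) x i) =
    \big[Num.max/0]_(i in S) Num.min t (x i).
  by apply: big_morph => [a b|]; [exact: min_maxr | rewrite min_r].
rewrite (Hf _ xA) (Hf _ txA); apply: le_bigmin => [|S S_neq0].
  by rewrite ge_min t_le1.
rewrite -min_bigmax max_minr le_min ge_min le_max lexx orbT /= ge_min.
by apply/orP; right; exact: bigmin_le_cond.
Qed.

Lemma OWA_GMVS_bool_valued w f (b : 'I_n -> bool) :
  OWA_weights w f -> is_GMVS f -> inA (f (fun i => (b i)%:R)) ->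
  f (fun i => (b i)%:R) = 0 \/ f (fun i => (b i)%:R) = 1.
Proof.
move=> Hw Hg /andP[y_ge0 y_le1].
have half_A : inA (1 / 2 : R) by rewrite /inA; apply/andP; split; lra.
have bA := bool_profile_in_A b.
have halve :
    (fun i => Num.min (1 / 2) (b i)%:R) = (fun i => 1 / 2 * (b i)%:R :> R).
  apply: funext => i; case: (b i); rewrite (mulr1n, mulr0n).
    by rewrite mulr1 min_l //; lra.
  by rewrite mulr0 min_r //; lra.
have := GMVS_min_le Hg half_A bA.
rewrite halve (OWA_weights_scale Hw half_A bA) ge_min.
by case/orP=> ?; [right | left]; lra.
Qed.

Lemma OWA_weights_step w f (m : nat) : OWA_weights w f ->
  f (fun i => ((m <= i)%N)%:R) = \sum_(k < n) w k * ((m <= k)%N)%:R.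
Proof.
move=> Hw; rewrite (Hw _ (bool_profile_in_A _) 1%g).
  by under eq_bigr do rewrite perm1.
move=> a b le_ab; rewrite !perm1 ler_nat.
by case: (leqP m a) => [le_ma | //]; rewrite (leq_trans le_ma le_ab).
Qed.

Lemma tail_sum_split (w : 'I_n -> R) (k : 'I_n) :
  \sum_(j < n) w j * ((k <= j)%N)%:R = w k + \sum_(j < n) w j * ((k < j)%N)%:R.
Proof.
rewrite (bigD1 k) //= [X in _ = _ + X](bigD1 k) //= leqnn ltnn mulr1 mulr0 add0r.
congr (_ + _); apply: eq_bigr => j j_neq_k; rewrite leq_eqVlt.
by case: eqP => // /val_inj k_eq_j; rewrite k_eq_j eqxx in j_neq_k.
Qed.

Lemma OWA_GMVS_weights_bool w f :
  OWA_weights w f -> is_GMVS f -> (forall x, profile_in_A x -> inA (f x)) ->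
  (forall k, inA (w k)) -> forall k, w k = 0 \/ w k = 1.
Proof.
move=> Hw Hg fA wA k; have /andP[w_ge0 _] := wA k.
pose W m := \sum_(j < n) w j * ((m <= j)%N)%:R.
have W_bool m : W m = 0 \/ W m = 1.
  rewrite /W -(OWA_weights_step m Hw); apply: OWA_GMVS_bool_valued Hw Hg _.
  exact/fA/bool_profile_in_A.
have := tail_sum_split w k; rewrite -/(W k) -/(W k.+1).
case: (W_bool k) => ->; case: (W_bool k.+1) => -> split_k;
  [left | exfalso | right | left]; lra.
Qed.

Lemma bool_weights_delta (w : 'I_n -> R) :
  (forall k, w k = 0 \/ w k = 1) -> \sum_(k < n) w k = 1 ->
  exists j, forall k, w k = (k == j)%:R.
Proof.
move=> w_bool w_sum1.
have w_ge0 k : 0 <= w k by case: (w_bool k) => ->; rewrite ?lexx ?ler01.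
have [j w_j] : exists j, w j = 1.
  case: (pickP (fun k => w k == 1)) => [j /eqP | not1]; first by exists j.
  move: w_sum1; rewrite big1 => [|k _]; first by move/eqP; rewrite eq_sym oner_eq0.
  by case: (w_bool k) => // w_k; move: (not1 k); rewrite w_k eqxx.
exists j => k; case: eqVneq => [-> // | k_neq_j].
have rest : \sum_(i < n | i != j) w i = 0.
  by move: w_sum1; rewrite (bigD1 j) //= w_j => ?; lra.
exact: (psumr_eq0P (fun i _ => w_ge0 i) rest).
Qed.

End OrderStatistics.

Theorem corollary1 (R : realType) (n : nat) (f : ('I_n -> R) -> R) :
  (0 < n)%N ->
  (forall x, profile_in_A x -> inA (f x)) ->
  (is_order_statistic f <-> is_OWA f /\ is_GMVS f).
Proof.
move=> _ fA; split.
  case=> j Hj; split; first exact: order_statistic_OWA Hj.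
  exact: order_statistic_GMVS Hj.
case=> [[w [wA [w_sum1 Hw]]] Hg].
have w_bool := OWA_GMVS_weights_bool Hw Hg fA wA.
have [j w_delta] := bool_weights_delta w_bool w_sum1.
exists j; apply/OWA_weights_delta => x xA pi Hpi.
by rewrite (Hw x xA pi Hpi); apply: eq_bigr => k _; rewrite w_delta.
Qed.
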